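(* Let $R$ be a finite commutative local Frobenius ring with residue field $\mathbb{F}_q$. For $i=1,2$, let $C_i$ be a linear code of length $n$ over $R$ with generator matrix $\mathrm{G}_i$ and parity check matrix $\mathrm{H}_i$. Then $\dim(C_1\cap C_2)=\dim(C_1)-\texttt{Rank}_q(\mathrm{H}_2\mathrm{G}_1^\top)$ or $\dim(C_1\cap C_2)=\dim(C_2)-\texttt{Rank}_q(\mathrm{H}_1\mathrm{G}_2^\top)$.
   Context: A linear code of length $n$ over $R$ is an $R$-submodule of $R^n$; $\dim(C):=\log_q|C|$. A generator matrix of $C$ is a matrix whose rows generate $C$; a parity check matrix of $C$ is a generator matrix of $C^\perp=\{\mathbf{u}\in R^n:\sum_j u_jc_j=0\ \forall \mathbf{c}\in C\}$. For a matrix $\mathrm{A}$ over $R$, $\texttt{Rank}_q(\mathrm{A}):=\log_q|M|$ where $M$ is the $R$-submodule spanned by the rows of $\mathrm{A}$. *)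

From HB Require Import structures.
From mathcomp Require Import all_boot all_order all_algebra.
From Stdlib Require Rdefinitions Raxioms Rfunctions Rpower.

Set Implicit Arguments.
Unset Strict Implicit.
Unset Printing Implicit Defensive.

Import GRing.Theory.
Local Open Scope ring_scope.

Section RingNotions.
Variable R : finComNzRingType.

Definition is_ideal (I : {set R}) : Prop :=
  [/\ (0 : R) \in I,
      (forall x y, x \in I -> y \in I -> x + y \in I) &
      (forall r x, x \in I -> r * x \in I)].

Definition is_maximal_ideal (M : {set R}) : Prop :=
  [/\ is_ideal M, M != [set: R] &
      forall J, is_ideal J -> M \subset J -> J = M \/ J = [set: R]].

Definition local_with_max (M : {set R}) : Prop :=
  is_maximal_ideal M /\ forall J, is_maximal_ideal J -> J = M.

Definition is_minimal_ideal (I : {set R}) : Prop :=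
  [/\ is_ideal I, I != [set 0 : R] &
      forall J, is_ideal J -> J \subset I -> J = [set 0 : R] \/ J = I].

(* The socle soc(R): the sum of all minimal ideals, i.e. the smallest ideal
   containing every minimal ideal. *)
Definition in_socle (x : R) : Prop :=
  forall J : {set R}, is_ideal J ->
    (forall I, is_minimal_ideal I -> I \subset J) -> x \in J.

(* Frobenius (local case, residue field R/M): soc(R) is isomorphic to R/M as
   an R-module.  An R-isomorphism R/M ~ soc(R) is the same as an R-linear map
   R -> soc(R), necessarily r |-> a*r, that is onto soc(R) with kernel M. *)
Definition local_frobenius (M : {set R}) : Prop :=
  exists a : R,
    (forall y, (exists r, y = a * r) <-> in_socle y) /\
    (forall r, a * r = 0 <-> r \in M).

Definition residue_card (M : {set R}) : nat := #|[set: R]| %/ #|M|.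

Variable n : nat.

Definition linear_code (C : {set 'rV[R]_n}) : Prop :=
  [/\ (0 : 'rV[R]_n) \in C,
      (forall x y, x \in C -> y \in C -> x + y \in C) &
      (forall (r : R) x, x \in C -> r *: x \in C)].

Definition rowspan (k m : nat) (A : 'M[R]_(k, m)) : {set 'rV[R]_m} :=
  [set u *m A | u : 'rV[R]_k].

Definition dual_code (C : {set 'rV[R]_n}) : {set 'rV[R]_n} :=
  [set u : 'rV[R]_n | [forall c in C, \sum_(j < n) u 0 j * c 0 j == 0]].

Definition generator_matrix (k : nat) (G : 'M[R]_(k, n)) (C : {set 'rV[R]_n}) :=
  rowspan G = C.

Definition parity_check_matrix (l : nat) (H : 'M[R]_(l, n)) (C : {set 'rV[R]_n}) :=
  rowspan H = dual_code C.
End RingNotions.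

Definition logq (q N : nat) : Rdefinitions.R :=
  Rdefinitions.Rdiv (Rpower.ln (Raxioms.INR N)) (Rpower.ln (Raxioms.INR q)).

Definition dimq (q : nat) (T : finType) (C : {set T}) : Rdefinitions.R :=
  logq q #|C|.

Definition Rankq (R : finComNzRingType) (q k m : nat) (A : 'M[R]_(k, m)) : Rdefinitions.R :=
  logq q #|rowspan A|.

(** Over a finite Frobenius ring [R], an additive character [chi] whose kernel
  contains no nonzero ideal exists (the socle of a local Frobenius ring is a
  simple module lying in every nonzero ideal, and [chi] only has to avoid one
  of its generators).  Character sums then give [|N| |N^perp| = |R^n|] for
  every submodule [N] of [R^n], hence [N^perp^perp = N].  The kernel of
  [c |-> H2 c^T] on [C1 = rowspan G1] is [C1 :&: C2], so
  [|C1| = |rowspan (G1 H2^T)| |C1 :&: C2|], and counting the kernel of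
  [u |-> u A] twice shows [|rowspan A| = |rowspan A^T|]; taking [log_q]
  gives the first alternative. *)
From Stdlib Require Import Reals Lra Classical.
From mathcomp Require Import all_boot all_order all_algebra.
From mathcomp Require Import all_fingroup all_field all_character.

Set Implicit Arguments.
Unset Strict Implicit.
Unset Printing Implicit Defensive.

Import GRing.Theory Num.Theory.
Local Open Scope ring_scope.

Section AdditiveCharacters.
Variable T : finZmodType.

Definition additive_char (chi : T -> algC) :=
  chi 0 = 1 /\ {morph chi : x y / x + y >-> x * y}.

Lemma additive_char_separates (a : T) :
  a != 0 -> exists2 chi, additive_char chi & chi a != 1.
Proof.
move=> a0.
have cTT : abelian [set: T]%G.
  by apply/centsP => x _ y _; apply: FinRing.zmod_mulgC.
have [i a_ker] : exists i : Iirr [set: T]%G, a \notin cfker 'chi_i.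
  apply/existsP; apply: contraR a0 => /existsPn a_ker.
  suff : a \in \bigcap_i cfker 'chi[[set: T]%G]_i by rewrite TI_cfker_irr inE.
  by apply/bigcapP => i _; rewrite -[_ \in _]negbK a_ker.
have lin := char_abelianP _ cTT i.
rewrite cfkerEirr inE (lin_char1 lin) in a_ker.
exists (fun x => 'chi_i x) => //; split; first by rewrite -(lin_char1 lin).
by move=> x y; rewrite -(lin_charM lin) ?inE.
Qed.

Lemma sum_additive_char_eq0 (chi : T -> algC) (S : {set T}) c0 :
  {morph chi : x y / x + y >-> x * y} ->
  {in S &, forall x y, x + y \in S} -> {in S, forall x, - x \in S} ->
  c0 \in S -> chi c0 != 1 -> \sum_(c in S) chi c = 0.
Proof.
move=> chiD addS oppS c0S chi_c0.
have shift : \sum_(c in S) chi c = (\sum_(c in S) chi c) * chi c0.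
  rewrite {1}(reindex_inj (addIr c0)) /= mulr_suml.
  apply: eq_big => [c|c _]; last by rewrite chiD.
  apply/idP/idP => [cc0S|cS]; last exact: addS cS c0S.
  by rewrite -(addrK c0 c) addS ?oppS.
have : (\sum_(c in S) chi c) * (1 - chi c0) = 0 by rewrite mulrBr mulr1 -shift subrr.
by move/eqP; rewrite mulf_eq0 subr_eq0 [1 == _]eq_sym (negbTE chi_c0) orbF => /eqP.
Qed.

End AdditiveCharacters.

Section LocalFrobenius.
Variable R : finComNzRingType.

Definition generating_char (chi : R -> algC) :=
  additive_char chi /\ forall y, y != 0 -> exists r, chi (r * y) != 1.

Lemma principal_ideal (y : R) : is_ideal [set r * y | r : R].
Proof.
split.
- by apply/imsetP; exists 0; rewrite ?mul0r.
- move=> _ _ /imsetP[r _ ->] /imsetP[s _ ->].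
  by apply/imsetP; exists (r + s); rewrite ?mulrDl.
- move=> t _ /imsetP[r _ ->].
  by apply/imsetP; exists (t * r); rewrite ?mulrA.
Qed.

Lemma nonzero_ideal_memN0 (I : {set R}) :
  is_ideal I -> I != [set 0] -> exists2 y, y \in I & y != 0.
Proof.
move=> [I0 _ _] I_neq0; apply/exists_inP; apply: contraR I_neq0 => /exists_inPn I_0.
by apply/eqP/setP => y; rewrite inE; apply/idP/eqP => [/I_0/negPn/eqP|->].
Qed.

Lemma ideal_sub_minimal (I : {set R}) :
  is_ideal I -> I != [set 0] -> exists2 J, is_minimal_ideal J & J \subset I.
Proof.
elim: {I}#|I| {-2}I (leqnn #|I|) => [|k IHk] I.
  by rewrite leqn0 cards_eq0 => /eqP -> [/[!inE]].
move=> leIk Iid I_neq0.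
case: (classic (is_minimal_ideal I)) => [Imin|not_min]; first by exists I.
have [J J_not] : exists J, ~ (is_ideal J -> J \subset I -> J = [set 0] \/ J = I).
  by apply: not_all_ex_not => I_min; apply: not_min; split.
have [Jid sJI] : is_ideal J /\ J \subset I by apply: NNPP; tauto.
have [J_neq0 J_neqI] : J != [set 0] /\ J != I by split; apply/eqP; tauto.
have ltJI : (#|J| < #|I|)%N by rewrite proper_card // properEneq J_neqI.
have [|K Kmin sKJ] := IHk J _ Jid J_neq0; first by rewrite -ltnS (leq_trans ltJI).
by exists K => //; apply: subset_trans sJI.
Qed.

Variable M : {set R}.
Hypotheses (hloc : local_with_max M) (hfrob : local_frobenius M).

(* For a minimal ideal [J] inside [I], [K := {r | a r \in J}] is an ideal
   containing [M = ann a]; a nonzero element of [J], which lies in the socle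
   [aR], shows [K != M], so [K = R] and [a \in J]. *)
Lemma local_frobenius_socle_gen :
  exists2 a : R, a != 0 & forall I, is_ideal I -> I != [set 0] -> a \in I.
Proof.
have [[[_ _ _] M_neqT Mmax] _] := hloc.
have [a [socE annE]] := hfrob.
have a_neq0 : a != 0.
  apply: contraNneq M_neqT => a0; apply/eqP/setP => r.
  by rewrite inE; apply/annE; rewrite a0 mul0r.
exists a => // I Iid I_neq0.
have [J Jmin sJI] := ideal_sub_minimal Iid I_neq0.
have [Jid J_neq0 _] := Jmin.
have [J0 JD JZ] := Jid.
pose K := [set r | a * r \in J].
have Kid : is_ideal K.
  split; rewrite ?inE ?mulr0 //.
    by move=> x y; rewrite !inE mulrDr; apply: JD.
  by move=> r x; rewrite !inE mulrCA; apply: JZ.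
have sMK : M \subset K by apply/subsetP => r /annE ar0; rewrite inE ar0.
suff : 1 \in K by rewrite inE mulr1 => /(subsetP sJI).
have [y yJ y_neq0] := nonzero_ideal_memN0 Jid J_neq0.
have [r y_ar] : exists r, y = a * r.
  by apply/socE => L Lid Lsoc; apply: (subsetP (Lsoc J Jmin)).
have rK : r \in K by rewrite inE -y_ar.
case: (Mmax K Kid sMK) => [KM | ->]; last by rewrite inE.
by case/eqP: y_neq0; rewrite y_ar; apply/annE; rewrite -KM.
Qed.

Lemma local_frobenius_generating_char : exists chi, generating_char chi.
Proof.
have [a a_neq0 a_min] := local_frobenius_socle_gen.
have [chi chi_add chi_a] := additive_char_separates a_neq0.
exists chi; split=> // y y_neq0.
have yI : y \in [set r * y | r : R] by apply/imsetP; exists 1; rewrite ?mul1r.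
have I_neq0 : [set r * y | r : R] != [set 0].
  by apply/eqP => I0; move: yI; rewrite I0 inE (negbTE y_neq0).
have /imsetP[r _ a_ry] := a_min _ (principal_ideal y) I_neq0.
by exists r; rewrite -a_ry.
Qed.

End LocalFrobenius.

Section DotProduct.
Variable R : finComNzRingType.

Definition dot n (u c : 'rV[R]_n) := \sum_(j < n) u 0 j * c 0 j.

Lemma dotC n (u c : 'rV[R]_n) : dot u c = dot c u.
Proof. by apply: eq_bigr => j _; rewrite mulrC. Qed.

Lemma dotDl n (u v c : 'rV[R]_n) : dot (u + v) c = dot u c + dot v c.
Proof. by rewrite /dot -big_split; apply: eq_bigr => j _; rewrite mxE mulrDl. Qed.

Lemma dotZl n r (u c : 'rV[R]_n) : dot (r *: u) c = r * dot u c.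
Proof. by rewrite /dot mulr_sumr; apply: eq_bigr => j _; rewrite mxE mulrA. Qed.

Lemma dotDr n (u c v : 'rV[R]_n) : dot u (c + v) = dot u c + dot u v.
Proof. by rewrite dotC dotDl !(dotC _ u). Qed.

Lemma dotZr n r (u c : 'rV[R]_n) : dot u (r *: c) = r * dot u c.
Proof. by rewrite dotC dotZl dotC. Qed.

Lemma dot0l n (c : 'rV[R]_n) : dot 0 c = 0.
Proof. by rewrite -(scale0r 0) dotZl mul0r. Qed.

Lemma dot0r n (u : 'rV[R]_n) : dot u 0 = 0.
Proof. by rewrite dotC dot0l. Qed.

Lemma dot_mulmx n (u c : 'rV[R]_n) : dot u c = (u *m c^T) 0 0.
Proof. by rewrite !mxE; apply: eq_bigr => j _; rewrite mxE. Qed.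

Lemma dot_delta n j (c : 'rV[R]_n) : dot (delta_mx 0 j) c = c 0 j.
Proof. by rewrite dot_mulmx -rowE !mxE. Qed.

Lemma dot_mulmx_tr m p (u : 'rV[R]_m) (B : 'M[R]_(m, p)) v :
  dot u (v *m B^T) = dot (u *m B) v.
Proof. by rewrite !dot_mulmx trmx_mul trmxK mulmxA. Qed.

Lemma rowN0_entry n (c : 'rV[R]_n) : c != 0 -> exists j, c 0 j != 0.
Proof.
move=> c_neq0; apply/existsP; apply: contraNT c_neq0 => /existsPn c0.
by apply/eqP/rowP => j; rewrite mxE; apply/eqP/negPn.
Qed.

Lemma dual_codeE n (N : {set 'rV[R]_n}) u :
  (u \in dual_code N) = [forall c in N, dot u c == 0].
Proof. by rewrite inE. Qed.

Lemma linear_codeN n (N : {set 'rV[R]_n}) : linear_code N -> {in N, forall c, - c \in N}.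
Proof. by case=> _ _ NZ c cN; rewrite -scaleN1r NZ. Qed.

Lemma dual_code_linear n (N : {set 'rV[R]_n}) : linear_code (dual_code N).
Proof.
split=> [|u v|r u]; rewrite !dual_codeE.
- by apply/forall_inP => c _; rewrite dot0l.
- by move=> /forall_inP uN /forall_inP vN; apply/forall_inP => c cN;
    rewrite dotDl (eqP (uN c cN)) (eqP (vN c cN)) addr0.
- by move=> /forall_inP uN; apply/forall_inP => c cN; rewrite dotZl (eqP (uN c cN)) mulr0.
Qed.

Lemma rowspan_linear k m (A : 'M[R]_(k, m)) : linear_code (rowspan A).
Proof.
split.
- by apply/imsetP; exists 0; rewrite ?mul0mx.
- move=> _ _ /imsetP[u _ ->] /imsetP[v _ ->].
  by apply/imsetP; exists (u + v); rewrite ?mulmxDl.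
- move=> r _ /imsetP[u _ ->].
  by apply/imsetP; exists (r *: u); rewrite ?scalemxAl.
Qed.

Lemma card_image_ker m p (B : 'M[R]_(m, p)) (S : {set 'rV[R]_m}) :
  {in S &, forall u v, u + v \in S} -> {in S, forall u, - u \in S} ->
  #|S| = (#|[set u *m B | u in S]| * #|[set u in S | (u *m B == 0)%R]|)%N.
Proof.
move=> addS oppS.
rewrite -sum1_card (partition_big_imset (fun u => u *m B)) /= -sum_nat_const.
apply: eq_bigr => _ /imsetP[u0 u0S ->].
rewrite -sum1_card (reindex_inj (addIr u0)) /=; apply: eq_bigl => u.
rewrite inE mulmxDl -subr_eq0 addrK; congr (_ && _).
apply/idP/idP => [uu0S|uS]; last exact: addS uS u0S.
by rewrite -(addrK u0 u) addS ?oppS.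
Qed.

Lemma ker_mulmx_dual m p (B : 'M[R]_(m, p)) (S : {set 'rV[R]_m}) :
  [set u in S | u *m B == 0] = S :&: dual_code (rowspan B^T).
Proof.
apply/setP => u; rewrite inE in_setI dual_codeE; congr (_ && _); apply/eqP/forall_inP.
  by move=> uB0 _ /imsetP[v _ ->]; rewrite dot_mulmx_tr uB0 dot0l.
move=> u_dual; apply/rowP => j; rewrite [RHS]mxE.
have Bj : delta_mx 0 j *m B^T \in rowspan B^T by apply/imsetP; exists (delta_mx 0 j).
have := u_dual _ Bj.
by rewrite dot_mulmx_tr dotC dot_delta => /eqP.
Qed.

End DotProduct.

Section CodeDuality.
Variables (R : finComNzRingType) (chi : R -> algC).
Hypothesis chi_gen : generating_char chi.

Lemma sum_char_dot_code n (N : {set 'rV[R]_n}) x : linear_code N ->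
  \sum_(c in N) chi (dot x c) = if x \in dual_code N then #|N|%:R else 0.
Proof.
have [[chi0 chiD] gen] := chi_gen.
move=> Ncode; have [_ N_add N_scale] := Ncode.
rewrite dual_codeE; case: ifPn => [/forall_inP x_dual | /forall_inPn[c cN /gen[r chi_rc]]].
  by rewrite -sumr_const; apply: eq_bigr => c /x_dual/eqP ->.
apply: (@sum_additive_char_eq0 _ (fun c => chi (dot x c)) _ (r *: c)) => //=.
- by move=> u v; rewrite /= dotDr chiD.
- exact: linear_codeN.
- exact: N_scale.
- by rewrite dotZr.
Qed.

Lemma sum_char_dot_space n (c : 'rV[R]_n) :
  \sum_x chi (dot x c) = if c == 0 then #|{: 'rV[R]_n}|%:R else 0.
Proof.
have [[chi0 chiD] gen] := chi_gen.
case: eqP => [-> | /eqP/rowN0_entry[j /gen[r chi_rc]]].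
  by rewrite -sumr_const; apply: eq_bigr => x _; rewrite dot0r chi0.
transitivity (\sum_(x in [set: 'rV[R]_n]) chi (dot x c)).
  by apply: eq_bigl => x; rewrite inE.
apply: (@sum_additive_char_eq0 _ (fun x => chi (dot x c)) _ (r *: delta_mx 0 j)) => //=.
- by move=> u v; rewrite /= dotDl chiD.
- by move=> *; rewrite inE.
- by move=> *; rewrite inE.
- by rewrite inE.
- by rewrite dotZl dot_delta.
Qed.

Lemma card_code_dual n (N : {set 'rV[R]_n}) : linear_code N ->
  (#|N| * #|dual_code N|)%N = #|{: 'rV[R]_n}|.
Proof.
move=> Ncode; have [N0 _ _] := Ncode.
apply/eqP; rewrite -(eqr_nat algC) natrM; apply/eqP.
transitivity (\sum_x \sum_(c in N) chi (dot x c)).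
  under eq_bigr do rewrite sum_char_dot_code //.
  by rewrite -big_mkcond sumr_const mulr_natr.
rewrite exchange_big; under eq_bigr do rewrite sum_char_dot_space.
by rewrite (bigD1 0) //= eqxx big1 ?addr0 // => c /andP[_ /negbTE ->].
Qed.

Lemma dual_codeK n (N : {set 'rV[R]_n}) : linear_code N -> dual_code (dual_code N) = N.
Proof.
move=> Ncode; apply/esym/eqP; rewrite eqEcard; apply/andP; split.
  apply/subsetP => c cN; rewrite dual_codeE; apply/forall_inP => u.
  by rewrite dual_codeE dotC => /forall_inP/(_ c cN).
have dual_gt0 : (0 < #|dual_code N|)%N.
  by apply/card_gt0P; exists 0; case: (dual_code_linear N).
rewrite -(leq_pmul2r dual_gt0) card_code_dual // mulnC.
by rewrite (card_code_dual (dual_code_linear N)).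
Qed.

Lemma card_rowspan_tr k m (A : 'M[R]_(k, m)) : #|rowspan A| = #|rowspan A^T|.
Proof.
have := card_image_ker A (fun u v _ _ => in_setT (u + v)) (fun u _ => in_setT (- u)).
rewrite ker_mulmx_dual setTI cardsT -(card_code_dual (rowspan_linear A^T)).
have dual_gt0 : (0 < #|dual_code (rowspan A^T)|)%N.
  by apply/card_gt0P; exists 0; case: (dual_code_linear (rowspan A^T)).
move/eqP; rewrite eqn_pmul2r // => /eqP ->.
by apply: eq_card => y; apply/imsetP/imsetP => [[u _ ->]|[u _ ->]]; exists u.
Qed.

Lemma card_code_cap n k l (C1 C2 : {set 'rV[R]_n}) (G : 'M[R]_(k, n)) (H : 'M[R]_(l, n)) :
  rowspan G = C1 -> rowspan H = dual_code C2 -> linear_code C1 -> linear_code C2 ->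
  #|C1| = (#|rowspan (H *m G^T)| * #|C1 :&: C2|)%N.
Proof.
move=> defC1 defC2 C1code C2code.
have [_ addC1 _] := C1code.
rewrite card_rowspan_tr trmx_mul trmxK.
have -> : rowspan (G *m H^T) = [set c *m H^T | c in C1].
  rewrite -defC1; apply/setP => y; apply/imsetP/imsetP => [[u _ ->]|[_ /imsetP[u _ ->] ->]].
    by exists (u *m G); [apply/imsetP; exists u | rewrite mulmxA].
  by exists u; rewrite ?mulmxA.
rewrite (card_image_ker H^T addC1 (linear_codeN C1code)).
by rewrite ker_mulmx_dual trmxK defC2 dual_codeK.
Qed.

End CodeDuality.

Lemma logqM (q b c : nat) : (0 < b)%N -> (0 < c)%N ->
  logq q (b * c) = Rplus (logq q b) (logq q c).
Proof.
move=> /ltP b_gt0 /ltP c_gt0.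
rewrite /logq -multE mult_INR ln_mult; first by rewrite /Rdiv; ring.
all: exact: lt_0_INR.
Qed.

(* [card_code_cap] is an identity between cardinalities. *)
Theorem lemma3p9 (R : finComNzRingType) (M : {set R}) (q n : nat)
  (hloc : local_with_max M) (hfrob : local_frobenius M)
  (hq : q = residue_card M)
  (C1 C2 : {set 'rV[R]_n}) (hC1 : linear_code C1) (hC2 : linear_code C2)
  (k1 k2 l1 l2 : nat)
  (G1 : 'M[R]_(k1, n)) (G2 : 'M[R]_(k2, n))
  (H1 : 'M[R]_(l1, n)) (H2 : 'M[R]_(l2, n))
  (hG1 : generator_matrix G1 C1) (hG2 : generator_matrix G2 C2)
  (hH1 : parity_check_matrix H1 C1) (hH2 : parity_check_matrix H2 C2) :
  dimq q (C1 :&: C2) = Rdefinitions.Rminus (dimq q C1) (Rankq q (H2 *m G1^T)%R)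
  \/
  dimq q (C1 :&: C2) = Rdefinitions.Rminus (dimq q C2) (Rankq q (H1 *m G2^T)%R).
Proof.
have [chi chi_gen] := local_frobenius_generating_char hloc hfrob.
have cap_gt0 : (0 < #|C1 :&: C2|)%N.
  by apply/card_gt0P; exists 0; rewrite inE; case: hC1 => -> _ _; case: hC2.
have rank_gt0 : (0 < #|rowspan (H2 *m G1^T)|)%N.
  by apply/card_gt0P; exists 0; case: (rowspan_linear (H2 *m G1^T)).
left; rewrite /dimq /Rankq (card_code_cap chi_gen hG1 hH2 hC1 hC2) logqM //.
lra.
Qed.
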